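(* Let $\lambda$ be a positive integer, $k\neq 0$, $\psi_0\in\mathbb{R}$, $F(\psi)=\frac{k}{\sin^2(\lambda\psi+\psi_0)}$, $G(\psi)=\cos(\lambda\psi+\psi_0)$, and $I_\lambda=\left(p_r+\frac{1}{\lambda r}\mathcal{X}_L\right)^\lambda G(\psi)$. Then the three functions $H=\frac12p_r^2+\frac{1}{r^2}L$, $L=\frac12p_\psi^2+F(\psi)$ and $I_\lambda$ are functionally independent on $(r,\psi,p_r,p_\psi)$-phase space (their differentials are linearly independent outside a closed nowhere dense set). Consequently, on the phase space with coordinates $(r,\psi,z,p_r,p_\psi,p_z)$, the five functions $$H_0=\frac12\left(p_r^2+\frac{1}{r^2}p_\psi^2+p_z^2\right)+\frac{F(\psi)}{r^2},\quad H_1=\frac12p_z^2,\quad H_2=\frac12p_\psi^2+F(\psi),$$ $$H_3=\frac12\left[(rp_z-zp_r)^2+\left(1+\frac{z^2}{r^2}\right)p_\psi^2\right]+\left(1+\frac{z^2}{r^2}\right)F(\psi),$$ and $I_\lambda$ are functionally independent, so the Hamiltonian $H_0$ is maximally superintegrable.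
   Context: $(r,\psi,z)$ are cylindrical coordinates in Euclidean 3-space with $r>0$, and $(p_r,p_\psi,p_z)$ the conjugate momenta with canonical Poisson bracket; dots denote derivatives in $\psi$. $\mathcal{X}_L=p_\psi\frac{\partial}{\partial\psi}-\dot F\frac{\partial}{\partial p_\psi}$ is the Hamiltonian vector field of $L$, viewed as a differential operator; $p_r$ and $1/(\lambda r)$ act by multiplication, and the power means applying the operator $\lambda$ times to $G$. Each of $H_0,\dots,H_3,I_\lambda$ Poisson-commutes with $H_0$. *)

From Stdlib Require Import Reals ClassicalEpsilon.
Open Scope R_scope.

(** Points of R^n are represented as [nat -> R]; only coordinates [0..n-1] matter. *)

(** The derivative of a real function at a point (the limit if it exists,
    chosen by Hilbert's epsilon; arbitrary otherwise). *)
Definition Deriv (f : R -> R) (x : R) : R :=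
  epsilon (inhabits 0) (fun l => derivable_pt_lim f x l).

Definition upd (x : nat -> R) (i : nat) (t : R) : nat -> R :=
  fun j => if Nat.eqb j i then t else x j.

Definition pd (i : nat) (f : (nat -> R) -> R) (x : nat -> R) : R :=
  Deriv (fun t => f (upd x i t)) (x i).

Definition has_grad (n : nat) (f : (nat -> R) -> R) (x : nat -> R) (g : nat -> R) : Prop :=
  forall i, (i < n)%nat -> derivable_pt_lim (fun t => f (upd x i t)) (x i) (g i).

Fixpoint sumR (m : nat) (f : nat -> R) : R :=
  match m with O => 0 | S k => sumR k f + f k end.

Definition lin_indep (n m : nat) (v : nat -> nat -> R) : Prop :=
  forall c : nat -> R,
    (forall i, (i < n)%nat -> sumR m (fun j => c j * v j i) = 0) ->
    forall j, (j < m)%nat -> c j = 0.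

Fixpoint distn (n : nat) (x y : nat -> R) : R :=
  match n with O => 0 | S k => Rmax (distn k x y) (Rabs (x k - y k)) end.

Definition closed_n (n : nat) (S : (nat -> R) -> Prop) : Prop :=
  forall x, (forall eps, eps > 0 -> exists y, S y /\ distn n x y < eps) -> S x.

Definition empty_interior_n (n : nat) (S : (nat -> R) -> Prop) : Prop :=
  forall x eps, eps > 0 -> exists y, distn n x y < eps /\ ~ S y.

Definition func_indep (n m : nat) (dom : (nat -> R) -> Prop)
    (f : nat -> (nat -> R) -> R) : Prop :=
  exists S : (nat -> R) -> Prop,
    closed_n n S /\ empty_interior_n n S /\
    forall x, dom x -> ~ S x ->
      exists g : nat -> nat -> R,
        (forall j, (j < m)%nat -> has_grad n (f j) x (g j)) /\ lin_indep n m g.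

Definition Fpot (lam : nat) (k psi0 : R) (psi : R) : R :=
  k / (sin (INR lam * psi + psi0)) ^ 2.

Definition Gfun (lam : nat) (psi0 : R) (psi : R) : R :=
  cos (INR lam * psi + psi0).

(** Reduced phase space R^4 with coordinates
    x 0 = r, x 1 = ψ, x 2 = p_r, x 3 = p_ψ. *)
Definition dom4 (lam : nat) (psi0 : R) (x : nat -> R) : Prop :=
  x 0%nat > 0 /\ sin (INR lam * x 1%nat + psi0) <> 0.

Definition L4 (lam : nat) (k psi0 : R) (x : nat -> R) : R :=
  / 2 * (x 3%nat) ^ 2 + Fpot lam k psi0 (x 1%nat).

Definition H4 (lam : nat) (k psi0 : R) (x : nat -> R) : R :=
  / 2 * (x 2%nat) ^ 2 + / (x 0%nat) ^ 2 * L4 lam k psi0 x.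

Definition XL (lam : nat) (k psi0 : R) (f : (nat -> R) -> R) (x : nat -> R) : R :=
  x 3%nat * pd 1 f x - Deriv (Fpot lam k psi0) (x 1%nat) * pd 3 f x.

Definition Dop (lam : nat) (k psi0 : R) (f : (nat -> R) -> R) (x : nat -> R) : R :=
  x 2%nat * f x + / (INR lam * x 0%nat) * XL lam k psi0 f x.

Definition Ilam4 (lam : nat) (k psi0 : R) : (nat -> R) -> R :=
  Nat.iter lam (Dop lam k psi0) (fun x => Gfun lam psi0 (x 1%nat)).

(** Full phase space R^6 with coordinates
    x 0 = r, x 1 = ψ, x 2 = z, x 3 = p_r, x 4 = p_ψ, x 5 = p_z. *)
Definition dom6 (lam : nat) (psi0 : R) (x : nat -> R) : Prop :=
  x 0%nat > 0 /\ sin (INR lam * x 1%nat + psi0) <> 0.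

Definition proj64 (x : nat -> R) : nat -> R :=
  fun i => match i with
           | 0%nat => x 0%nat | 1%nat => x 1%nat
           | 2%nat => x 3%nat | 3%nat => x 4%nat | _ => 0 end.

Definition H0 (lam : nat) (k psi0 : R) (x : nat -> R) : R :=
  / 2 * ((x 3%nat) ^ 2 + / (x 0%nat) ^ 2 * (x 4%nat) ^ 2 + (x 5%nat) ^ 2)
  + Fpot lam k psi0 (x 1%nat) / (x 0%nat) ^ 2.

Definition H1 (x : nat -> R) : R := / 2 * (x 5%nat) ^ 2.

Definition H2 (lam : nat) (k psi0 : R) (x : nat -> R) : R :=
  / 2 * (x 4%nat) ^ 2 + Fpot lam k psi0 (x 1%nat).

Definition H3 (lam : nat) (k psi0 : R) (x : nat -> R) : R :=
  / 2 * ((x 0%nat * x 5%nat - x 2%nat * x 3%nat) ^ 2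
         + (1 + (x 2%nat) ^ 2 / (x 0%nat) ^ 2) * (x 4%nat) ^ 2)
  + (1 + (x 2%nat) ^ 2 / (x 0%nat) ^ 2) * Fpot lam k psi0 (x 1%nat).

Definition Ilam6 (lam : nat) (k psi0 : R) (x : nat -> R) : R :=
  Ilam4 lam k psi0 (proj64 x).

Definition family4 (lam : nat) (k psi0 : R) (j : nat) : (nat -> R) -> R :=
  match j with
  | 0%nat => H4 lam k psi0
  | 1%nat => L4 lam k psi0
  | _ => Ilam4 lam k psi0
  end.

Definition family6 (lam : nat) (k psi0 : R) (j : nat) : (nat -> R) -> R :=
  match j with
  | 0%nat => H0 lam k psi0
  | 1%nat => H1
  | 2%nat => H2 lam k psi0
  | 3%nat => H3 lam k psi0
  | _ => Ilam6 lam k psi0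
  end.

(* All functions involved are polynomials in the coordinates, [1/r], [1/sin (λψ + ψ0)],
   [cos (λψ + ψ0)] and [sin (λψ + ψ0)], so they are represented by terms that are
   differentiated symbolically.  Since [∂_{p_r}] commutes with [X_L], the integral [I_λ]
   is a polynomial of degree [λ] in [p_r] with top coefficient [cos (λψ + ψ0)], hence
   [∂_{p_r}^λ (X_L I_λ) = - λ! λ p_ψ sin (λψ + ψ0)] and [X_L I_λ] vanishes on no
   [p_r]-interval when [p_ψ <> 0].  The differentials of [H], [L], [I_λ] are independent
   wherever [r sin (λψ + ψ0) p_r p_ψ X_L I_λ <> 0], and the zero set of this continuous
   product is closed and nowhere dense.  In six dimensions the factors [p_z] and [∂_z H3]
   are added; only [H3] depends on [z], and [∂_z H3] is affine in [z]. *)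

From Stdlib Require Import Reals Lra Lia FunctionalExtensionality ClassicalEpsilon Classical.
Open Scope R_scope.

Lemma upd_eq x i t : upd x i t i = t.
Proof. unfold upd; rewrite Nat.eqb_refl; reflexivity. Qed.

Lemma upd_neq x i j t : i <> j -> upd x i t j = x j.
Proof.
  intros Hij; unfold upd.
  destruct (Nat.eqb_spec j i); [congruence | reflexivity].
Qed.

Lemma upd_id x i : upd x i (x i) = x.
Proof.
  extensionality j; unfold upd.
  destruct (Nat.eqb_spec j i); [subst |]; reflexivity.
Qed.

Lemma upd_upd x i s t : upd (upd x i s) i t = upd x i t.
Proof. extensionality j; unfold upd; destruct (Nat.eqb j i); reflexivity. Qed.

Lemma Deriv_eq f x l : derivable_pt_lim f x l -> Deriv f x = l.
Proof.
  intros Hl; unfold Deriv.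
  apply (uniqueness_limite f x).
  - exact (epsilon_spec (inhabits 0) _ (ex_intro _ l Hl)).
  - exact Hl.
Qed.

Lemma derivable_pt_lim_affine_comp h c d x l :
  derivable_pt_lim h (c * x + d) l ->
  derivable_pt_lim (fun t => h (c * t + d)) x (l * c).
Proof.
  intros Hh.
  apply (derivable_pt_lim_comp (fun t => c * t + d) h x c l); [| exact Hh].
  assert (Hlin : derivable_pt_lim (mult_real_fct c id + fct_cte d)%F x (c * 1 + 0)).
  { apply derivable_pt_lim_plus;
      [apply derivable_pt_lim_scal, derivable_pt_lim_id | apply derivable_pt_lim_const]. }
  rewrite Rmult_1_r, Rplus_0_r in Hlin.
  exact (derivable_pt_lim_ext _ _ _ _ (fun _ => eq_refl) Hlin).
Qed.

Lemma derivable_pt_lim_Rinv_comp f x l :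
  derivable_pt_lim f x l -> f x <> 0 ->
  derivable_pt_lim (fun t => / f t) x (- l * / f x * / f x).
Proof.
  intros Hf Hx.
  apply (derivable_pt_lim_ext (fct_cte 1 / f)%F).
  { intro t; unfold div_fct, fct_cte, Rdiv; ring. }
  replace (- l * / f x * / f x) with ((0 * f x - l * fct_cte 1 x) / (f x)²)
    by (unfold fct_cte, Rsqr; field; exact Hx).
  apply derivable_pt_lim_div; [apply derivable_pt_lim_const | exact Hf | exact Hx].
Qed.

Lemma nonzero_near f y : continuity_pt f y -> f y <> 0 ->
  exists al be, al < y < be /\ forall t, al < t < be -> f t <> 0.
Proof.
  intros Hc Hy.
  destruct (Hc (Rabs (f y)) (Rabs_pos_lt _ Hy)) as [d [Hd Hnear]].
  exists (y - d), (y + d); split; [lra |].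
  intros t Ht Hft.
  destruct (Req_dec t y) as [-> | Hty]; [contradiction |].
  assert (Hdist : R_dist (f t) (f y) < Rabs (f y)).
  { apply Hnear; split; [split; [exact I | congruence] |].
    unfold R_dist; apply Rabs_def1; lra. }
  unfold R_dist in Hdist; rewrite Hft, Rminus_0_l, Rabs_Ropp in Hdist; lra.
Qed.

Lemma distn_coord n x y i : (i < n)%nat -> Rabs (x i - y i) <= distn n x y.
Proof.
  induction n as [| n IH]; intros Hi; [lia |]; simpl.
  destruct (Nat.eq_dec i n) as [-> | Hin]; [apply Rmax_r |].
  eapply Rle_trans; [apply IH; lia | apply Rmax_l].
Qed.

Lemma distn_lt n x y eps : 0 < eps ->
  (forall i, (i < n)%nat -> Rabs (x i - y i) < eps) -> distn n x y < eps.
Proof.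
  induction n as [| n IH]; intros Heps Hxy; simpl; [exact Heps |].
  apply Rmax_lub_lt; [apply IH | apply Hxy]; auto with arith.
Qed.

Definition continuous_n (n : nat) (f : (nat -> R) -> R) (x : nat -> R) : Prop :=
  forall eps, 0 < eps ->
    exists d, 0 < d /\ forall y, distn n x y < d -> Rabs (f y - f x) < eps.

Lemma continuous_n_const n c x : continuous_n n (fun _ => c) x.
Proof.
  intros eps Heps; exists 1; split; [lra |].
  intros y _; rewrite Rminus_diag, Rabs_R0; exact Heps.
Qed.

Lemma continuous_n_coord n (h : R -> R) (f : (nat -> R) -> R) x i :
  (i < n)%nat -> (forall y, f y = h (y i)) -> continuity_pt h (x i) ->
  continuous_n n f x.
Proof.
  intros Hi Hf Hh eps Heps.
  destruct (Hh eps Heps) as [d [Hd Hnear]].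
  exists d; split; [exact Hd |]; intros y Hy; rewrite !Hf.
  destruct (Req_dec (y i) (x i)) as [E | E].
  - rewrite E, Rminus_diag, Rabs_R0; exact Heps.
  - apply Hnear; split; [split; [exact I | auto] |].
    simpl; unfold R_dist; rewrite Rabs_minus_sym.
    eapply Rle_lt_trans; [apply distn_coord; exact Hi | exact Hy].
Qed.

Lemma continuous_n_add n f g x :
  continuous_n n f x -> continuous_n n g x -> continuous_n n (fun y => f y + g y) x.
Proof.
  intros Hf Hg eps Heps.
  destruct (Hf (eps / 2)) as [d1 [Hd1 H1]]; [lra |].
  destruct (Hg (eps / 2)) as [d2 [Hd2 H2]]; [lra |].
  exists (Rmin d1 d2); split; [apply Rmin_pos; assumption |].
  intros y Hy.
  specialize (H1 y (Rlt_le_trans _ _ _ Hy (Rmin_l d1 d2))).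
  specialize (H2 y (Rlt_le_trans _ _ _ Hy (Rmin_r d1 d2))).
  replace (f y + g y - (f x + g x)) with ((f y - f x) + (g y - g x)) by ring.
  eapply Rle_lt_trans; [apply Rabs_triang | lra].
Qed.

Lemma continuous_n_mul n f g x :
  continuous_n n f x -> continuous_n n g x -> continuous_n n (fun y => f y * g y) x.
Proof.
  intros Hf Hg eps Heps.
  set (A := Rabs (f x)); set (B := Rabs (g x)).
  assert (HA : 0 <= A) by apply Rabs_pos.
  assert (HB : 0 <= B) by apply Rabs_pos.
  (* [eta] makes [eta^2 + A eta + B eta <= eps]. *)
  set (eta := Rmin 1 (eps / (1 + A + B))).
  assert (Heta : 0 < eta) by (apply Rmin_pos; [lra | apply Rdiv_lt_0_compat; lra]).
  assert (Heta1 : eta <= 1) by apply Rmin_l.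
  assert (Heta2 : eta * (1 + A + B) <= eps).
  { apply (Rle_trans _ (eps / (1 + A + B) * (1 + A + B))).
    - apply Rmult_le_compat_r; [lra | apply Rmin_r].
    - right; field; lra. }
  destruct (Hf eta Heta) as [d1 [Hd1 H1]].
  destruct (Hg eta Heta) as [d2 [Hd2 H2]].
  exists (Rmin d1 d2); split; [apply Rmin_pos; assumption |].
  intros y Hy.
  specialize (H1 y (Rlt_le_trans _ _ _ Hy (Rmin_l d1 d2))).
  specialize (H2 y (Rlt_le_trans _ _ _ Hy (Rmin_r d1 d2))).
  replace (f y * g y - f x * g x)
    with ((f y - f x) * (g y - g x) + (f x * (g y - g x) + g x * (f y - f x))) by ring.
  set (u := Rabs (f y - f x)) in *; set (v := Rabs (g y - g x)) in *.
  assert (Hu : 0 <= u) by apply Rabs_pos.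
  assert (Hv : 0 <= v) by apply Rabs_pos.
  eapply Rle_lt_trans; [apply Rabs_triang |].
  eapply Rle_lt_trans; [apply Rplus_le_compat_l, Rabs_triang |].
  rewrite !Rabs_mult; fold u v A B.
  nra.
Qed.

Lemma zero_set_closed n (f : (nat -> R) -> R) :
  (forall x, f x <> 0 -> continuous_n n f x) -> closed_n n (fun x => f x = 0).
Proof.
  intros Hcont x Hadh; apply NNPP; intro Hx.
  destruct (Hcont x Hx (Rabs (f x)) (Rabs_pos_lt _ Hx)) as [d [Hd Hnear]].
  destruct (Hadh d Hd) as [y [Hy Hxy]].
  specialize (Hnear y Hxy); rewrite Hy, Rminus_0_l, Rabs_Ropp in Hnear; lra.
Qed.

(** * Terms in [1/r], [sin (a ψ + b)], [cos (a ψ + b)] and the coordinates *)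

Section Terms.

Variables a b : R.

Inductive term : Type :=
  | tconst (c : R)
  | tvar (i : nat)
  | tinv_r
  | tcos
  | tsin
  | tinv_sin
  | tadd (u v : term)
  | tmul (u v : term).

Fixpoint eval (e : term) (x : nat -> R) : R :=
  match e with
  | tconst c => c
  | tvar i => x i
  | tinv_r => / x 0%nat
  | tcos => cos (a * x 1%nat + b)
  | tsin => sin (a * x 1%nat + b)
  | tinv_sin => / sin (a * x 1%nat + b)
  | tadd u v => eval u x + eval v x
  | tmul u v => eval u x * eval v x
  end.

Fixpoint tderiv (i : nat) (e : term) : term :=
  match e with
  | tconst _ => tconst 0
  | tvar j => tconst (if Nat.eqb i j then 1 else 0)
  | tinv_r => if Nat.eqb i 0 then tmul (tconst (-1)) (tmul tinv_r tinv_r) else tconst 0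
  | tcos => if Nat.eqb i 1 then tmul (tconst (- a)) tsin else tconst 0
  | tsin => if Nat.eqb i 1 then tmul (tconst a) tcos else tconst 0
  | tinv_sin =>
      if Nat.eqb i 1 then tmul (tconst (- a)) (tmul tcos (tmul tinv_sin tinv_sin))
      else tconst 0
  | tadd u v => tadd (tderiv i u) (tderiv i v)
  | tmul u v => tadd (tmul (tderiv i u) v) (tmul u (tderiv i v))
  end.

Definition regular (x : nat -> R) : Prop := x 0%nat <> 0 /\ sin (a * x 1%nat + b) <> 0.

Lemma derivable_pt_lim_upd_const (f : (nat -> R) -> R) x i :
  (forall t, f (upd x i t) = f x) ->
  derivable_pt_lim (fun t => f (upd x i t)) (x i) 0.
Proof.
  intros Hf.
  apply (derivable_pt_lim_ext (fun _ => f x)); [intro t; symmetry; apply Hf |].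
  apply derivable_pt_lim_const.
Qed.

Lemma derivable_pt_lim_upd_angle (h : R -> R) x l :
  derivable_pt_lim h (a * x 1%nat + b) l ->
  derivable_pt_lim (fun t => h (a * upd x 1 t 1%nat + b)) (x 1%nat) (l * a).
Proof.
  intros Hh.
  apply (derivable_pt_lim_ext (fun t => h (a * t + b))); [intro t; rewrite upd_eq; reflexivity |].
  apply derivable_pt_lim_affine_comp, Hh.
Qed.

Lemma eval_tderiv e x i : regular x ->
  derivable_pt_lim (fun t => eval e (upd x i t)) (x i) (eval (tderiv i e) x).
Proof.
  intros [Hr Hs]; induction e as [c | j | | | | | u IHu v IHv | u IHu v IHv]; simpl.
  - apply derivable_pt_lim_const.
  - destruct (Nat.eqb_spec i j) as [<- | Hij]; simpl.
    + apply (derivable_pt_lim_ext id); [intro t; rewrite upd_eq; reflexivity |].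
      apply derivable_pt_lim_id.
    + apply (derivable_pt_lim_upd_const (fun y => y j)); intro t; apply upd_neq, Hij.
  - destruct (Nat.eqb_spec i 0) as [-> | Hi]; simpl.
    + apply (derivable_pt_lim_ext (fun t => / id t)); [intro t; rewrite upd_eq; reflexivity |].
      replace (-1 * (/ x 0%nat * / x 0%nat)) with (- 1 * / id (x 0%nat) * / id (x 0%nat))
        by (unfold id; ring).
      apply derivable_pt_lim_Rinv_comp; [apply derivable_pt_lim_id | exact Hr].
    + apply (derivable_pt_lim_upd_const (fun y => / y 0%nat)); intro t; rewrite upd_neq; auto.
  - destruct (Nat.eqb_spec i 1) as [-> | Hi]; simpl.
    + replace (- a * sin (a * x 1%nat + b)) with (- sin (a * x 1%nat + b) * a) by ring.
      apply derivable_pt_lim_upd_angle, derivable_pt_lim_cos.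
    + apply (derivable_pt_lim_upd_const (fun y => cos (a * y 1%nat + b))).
      intro t; rewrite upd_neq; auto.
  - destruct (Nat.eqb_spec i 1) as [-> | Hi]; simpl.
    + rewrite Rmult_comm; apply derivable_pt_lim_upd_angle, derivable_pt_lim_sin.
    + apply (derivable_pt_lim_upd_const (fun y => sin (a * y 1%nat + b))).
      intro t; rewrite upd_neq; auto.
  - destruct (Nat.eqb_spec i 1) as [-> | Hi]; simpl.
    + set (s := sin (a * x 1%nat + b)).
      replace (- a * (cos (a * x 1%nat + b) * (/ s * / s)))
        with (- cos (a * x 1%nat + b) * / s * / s * a) by ring.
      apply (derivable_pt_lim_upd_angle (fun u => / sin u)).
      apply derivable_pt_lim_Rinv_comp; [apply derivable_pt_lim_sin | exact Hs].
    + apply (derivable_pt_lim_upd_const (fun y => / sin (a * y 1%nat + b))).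
      intro t; rewrite upd_neq; auto.
  - apply (derivable_pt_lim_plus (fun t => eval u (upd x i t)) (fun t => eval v (upd x i t)));
      assumption.
  - pose proof (derivable_pt_lim_mult (fun t => eval u (upd x i t))
                  (fun t => eval v (upd x i t)) _ _ _ IHu IHv) as Hmul.
    simpl in Hmul; rewrite upd_id in Hmul; exact Hmul.
Qed.

Lemma regular_upd x i t : i <> 0%nat -> i <> 1%nat -> regular x -> regular (upd x i t).
Proof. intros Hi0 Hi1 [Hr Hs]; split; rewrite upd_neq; auto. Qed.

Lemma regular_near x i : regular x ->
  exists al be, al < x i < be /\ forall t, al < t < be -> regular (upd x i t).
Proof.
  intros [Hr Hs].
  destruct (Nat.eq_dec i 0) as [-> | Hi0]; [| destruct (Nat.eq_dec i 1) as [-> | Hi1]].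
  - destruct (nonzero_near id (x 0%nat) (derivable_continuous_pt _ _ (derivable_pt_id _)) Hr)
      as [al [be [Hx Hnz]]].
    exists al, be; split; [exact Hx |]; intros t Ht.
    split; [rewrite upd_eq; exact (Hnz t Ht) | rewrite upd_neq; auto].
  - assert (Hc : continuity_pt (fun t => sin (a * t + b)) (x 1%nat)).
    { apply derivable_continuous_pt; eexists.
      apply derivable_pt_lim_affine_comp, derivable_pt_lim_sin. }
    destruct (nonzero_near _ _ Hc Hs) as [al [be [Hx Hnz]]].
    exists al, be; split; [exact Hx |]; intros t Ht.
    split; [rewrite upd_neq; auto | rewrite upd_eq; exact (Hnz t Ht)].
  - exists (x i - 1), (x i + 1); split; [lra |].
    intros t _; apply regular_upd; auto; split; assumption.
Qed.

Lemma derivable_pt_lim_of_term (f : (nat -> R) -> R) e x i :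
  (forall y, regular y -> f y = eval e y) -> regular x ->
  derivable_pt_lim (fun t => f (upd x i t)) (x i) (eval (tderiv i e) x).
Proof.
  intros Hf Hx.
  destruct (regular_near x i Hx) as [al [be [Hxi Hnear]]].
  apply (derivable_pt_lim_locally_ext (fun t => eval e (upd x i t)) _ _ al be _ Hxi).
  - intros t Ht; symmetry; apply Hf, Hnear, Ht.
  - apply eval_tderiv, Hx.
Qed.

Lemma pd_of_term (f : (nat -> R) -> R) e x i :
  (forall y, regular y -> f y = eval e y) -> regular x ->
  pd i f x = eval (tderiv i e) x.
Proof. intros Hf Hx; apply Deriv_eq, derivable_pt_lim_of_term; assumption. Qed.

Definition teq (e1 e2 : term) : Prop := forall x, regular x -> eval e1 x = eval e2 x.

Lemma tderiv_teq i e1 e2 : teq e1 e2 -> teq (tderiv i e1) (tderiv i e2).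
Proof.
  intros Heq x Hx.
  apply (uniqueness_limite (fun t => eval e1 (upd x i t)) (x i)).
  - apply eval_tderiv, Hx.
  - apply derivable_pt_lim_of_term; assumption.
Qed.

Lemma tderiv_comm i j e x :
  eval (tderiv i (tderiv j e)) x = eval (tderiv j (tderiv i e)) x.
Proof.
  induction e as [c | l | | | | | u IHu v IHv | u IHu v IHv]; simpl;
    try (destruct (Nat.eqb j l), (Nat.eqb i l); simpl; ring);
    try (destruct (Nat.eqb j 0) eqn:Ej, (Nat.eqb i 0) eqn:Ei; simpl;
         rewrite ?Ej, ?Ei; simpl; ring);
    try (destruct (Nat.eqb j 1) eqn:Ej, (Nat.eqb i 1) eqn:Ei; simpl;
         rewrite ?Ej, ?Ei; simpl; ring);
    rewrite IHu, IHv; ring.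
Qed.

Fixpoint vars_below (n : nat) (e : term) : Prop :=
  match e with
  | tvar i => (i < n)%nat
  | tadd u v | tmul u v => vars_below n u /\ vars_below n v
  | _ => True
  end.

Lemma vars_below_tderiv n i e : vars_below n e -> vars_below n (tderiv i e).
Proof.
  induction e; simpl; try tauto;
    try (destruct (Nat.eqb i 0)); try (destruct (Nat.eqb i 1)); simpl; tauto.
Qed.

Lemma continuous_n_atom n e x c : (c < n)%nat -> regular x ->
  (forall y, eval e y = eval e (upd x c (y c))) -> continuous_n n (eval e) x.
Proof.
  intros Hc Hx He.
  apply (continuous_n_coord n (fun t => eval e (upd x c t)) _ x c Hc He).
  apply derivable_continuous_pt; eexists; apply eval_tderiv, Hx.
Qed.

Lemma continuous_n_eval n e x : (2 <= n)%nat -> vars_below n e -> regular x ->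
  continuous_n n (eval e) x.
Proof.
  intros Hn He Hx; induction e; simpl in He.
  - apply continuous_n_const.
  - apply (continuous_n_coord n id _ x i He); [reflexivity |].
    apply derivable_continuous_pt, derivable_pt_id.
  - apply (continuous_n_atom n tinv_r x 0); [lia | exact Hx |].
    intro y; simpl; rewrite upd_eq; reflexivity.
  - apply (continuous_n_atom n tcos x 1); [lia | exact Hx |].
    intro y; simpl; rewrite upd_eq; reflexivity.
  - apply (continuous_n_atom n tsin x 1); [lia | exact Hx |].
    intro y; simpl; rewrite upd_eq; reflexivity.
  - apply (continuous_n_atom n tinv_sin x 1); [lia | exact Hx |].
    intro y; simpl; rewrite upd_eq; reflexivity.
  - apply continuous_n_add; tauto.
  - apply continuous_n_mul; tauto.
Qed.

End Terms.

Lemma term_zero_set_closed a b n P : (2 <= n)%nat -> vars_below n P ->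
  (forall x, eval a b P x <> 0 -> regular a b x) ->
  closed_n n (fun x => eval a b P x = 0).
Proof.
  intros Hn HP Hreg; apply zero_set_closed.
  intros x Hx; apply continuous_n_eval; auto.
Qed.

Definition tderivn (a : R) (i m : nat) (e : term) : term := Nat.iter m (tderiv a i) e.

Lemma tderivn_zero_on_interval a b i y al be m e :
  (forall t, al < t < be -> regular a b (upd y i t)) ->
  (forall t, al < t < be -> eval a b e (upd y i t) = 0) ->
  forall t, al < t < be -> eval a b (tderivn a i m e) (upd y i t) = 0.
Proof.
  intros Hreg; revert e; induction m as [| m IH]; intros e He t Ht; [exact (He t Ht) |].
  change (tderivn a i (S m) e) with (tderiv a i (tderivn a i m e)).
  apply (uniqueness_limite (fun s => eval a b (tderivn a i m e) (upd (upd y i t) i s)) t).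
  - pose proof (eval_tderiv a b (tderivn a i m e) (upd y i t) i (Hreg t Ht)) as Hd.
    rewrite upd_eq in Hd; exact Hd.
  - apply (derivable_pt_lim_locally_ext (fun _ => 0) _ _ al be _ Ht);
      [| apply derivable_pt_lim_const].
    intros s Hs; rewrite upd_upd; symmetry; apply IH; assumption.
Qed.

(** * The integral [I_λ] as a polynomial in [p_r] *)

Section Integral.

Variables a b k : R.

Definition Fterm : term := tmul (tmul (tconst k) tinv_sin) tinv_sin.

Definition XL_term (e : term) : term :=
  tadd (tmul (tvar 3) (tderiv a 1 e)) (tmul (tconst (-1)) (tmul (tderiv a 1 Fterm) (tderiv a 3 e))).

Definition D_term (e : term) : term :=
  tadd (tmul (tvar 2) e) (tmul (tconst (/ a)) (tmul tinv_r (XL_term e))).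

Definition I_term (n : nat) : term := Nat.iter n D_term tcos.

Lemma XL_term_teq e1 e2 : teq a b e1 e2 -> teq a b (XL_term e1) (XL_term e2).
Proof.
  intros Heq x Hx; unfold XL_term; cbn [eval].
  rewrite (tderiv_teq a b 1 e1 e2 Heq x Hx), (tderiv_teq a b 3 e1 e2 Heq x Hx).
  reflexivity.
Qed.

Lemma D_term_teq e1 e2 : teq a b e1 e2 -> teq a b (D_term e1) (D_term e2).
Proof.
  intros Heq x Hx; unfold D_term; cbn [eval].
  rewrite (XL_term_teq e1 e2 Heq x Hx), (Heq x Hx); reflexivity.
Qed.

Lemma eval_D_term_0 x : eval a b (D_term (tconst 0)) x = 0.
Proof. unfold D_term, XL_term, Fterm; simpl; ring. Qed.

Lemma tderiv_pr_XL_term e x :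
  eval a b (tderiv a 2 (XL_term e)) x = eval a b (XL_term (tderiv a 2 e)) x.
Proof.
  unfold XL_term, Fterm; simpl.
  rewrite (tderiv_comm a b 2 1 e x), (tderiv_comm a b 2 3 e x); ring.
Qed.

Lemma tderiv_pr_D_term e x :
  eval a b (tderiv a 2 (D_term e)) x = eval a b e x + eval a b (D_term (tderiv a 2 e)) x.
Proof.
  unfold D_term; cbn [tderiv eval].
  rewrite tderiv_pr_XL_term; unfold XL_term, Fterm; simpl; ring.
Qed.

Lemma tderivn_pr_XL_term m e :
  teq a b (tderivn a 2 m (XL_term e)) (XL_term (tderivn a 2 m e)).
Proof.
  induction m as [| m IH]; intros x Hx; [reflexivity |].
  change (tderivn a 2 (S m) ?f) with (tderiv a 2 (tderivn a 2 m f)).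
  rewrite (tderiv_teq a b 2 _ _ IH x Hx), tderiv_pr_XL_term; reflexivity.
Qed.

(* Leibniz rule for [∂_{p_r}^(m+1) (p_r e)]; [∂_{p_r}] commutes with [r^-1 X_L]. *)
Lemma tderivn_pr_D_term m e :
  teq a b (tderivn a 2 (S m) (D_term e))
    (tadd (tmul (tconst (INR (S m))) (tderivn a 2 m e)) (D_term (tderivn a 2 (S m) e))).
Proof.
  induction m as [| m IH]; intros x Hx.
  - change (tderivn a 2 1 ?f) with (tderiv a 2 f); rewrite tderiv_pr_D_term.
    simpl; ring.
  - change (tderivn a 2 (S (S m)) ?f) with (tderiv a 2 (tderivn a 2 (S m) f)).
    rewrite (tderiv_teq a b 2 _ _ IH x Hx); cbn [tderiv eval].
    rewrite tderiv_pr_D_term, (S_INR (S m)); simpl; ring.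
Qed.

Lemma I_term_top_coefficient n :
  teq a b (tderivn a 2 n (I_term n)) (tmul (tconst (INR (Factorial.fact n))) tcos) /\
  teq a b (tderivn a 2 (S n) (I_term n)) (tconst 0).
Proof.
  induction n as [| n [IHtop IHzero]]; [split; intros x Hx; simpl; ring |].
  change (I_term (S n)) with (D_term (I_term n)); split; intros x Hx.
  - rewrite (tderivn_pr_D_term n _ x Hx); cbn [eval].
    rewrite (IHtop x Hx), (D_term_teq _ _ IHzero x Hx), eval_D_term_0; cbn [eval].
    change (Factorial.fact (S n)) with (S n * Factorial.fact n)%nat; rewrite mult_INR; ring.
  - assert (Hzero' : teq a b (tderivn a 2 (S (S n)) (I_term n)) (tconst 0)).
    { intros y Hy; change (tderivn a 2 (S (S n)) ?f) with (tderiv a 2 (tderivn a 2 (S n) f)).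
      rewrite (tderiv_teq a b 2 _ _ IHzero y Hy); reflexivity. }
    rewrite (tderivn_pr_D_term (S n) _ x Hx); cbn [eval].
    rewrite (IHzero x Hx), (D_term_teq _ _ Hzero' x Hx), eval_D_term_0; cbn [eval]; ring.
Qed.

Lemma XL_I_term_top_coefficient n x : regular a b x ->
  eval a b (tderivn a 2 n (XL_term (I_term n))) x
  = - INR (Factorial.fact n) * a * x 3%nat * sin (a * x 1%nat + b).
Proof.
  intros Hx.
  rewrite (tderivn_pr_XL_term n _ x Hx), (XL_term_teq _ _ (proj1 (I_term_top_coefficient n)) x Hx).
  unfold XL_term, Fterm; simpl; ring.
Qed.

(* [X_L I_λ] is a polynomial in [p_r] whose top coefficient does not vanish. *)
Lemma XL_I_term_nonzero_on_interval n y al be :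
  a <> 0 -> regular a b y -> y 3%nat <> 0 -> al < be ->
  exists t, al < t < be /\ eval a b (XL_term (I_term n)) (upd y 2 t) <> 0.
Proof.
  intros Ha Hy Hp Hab; apply NNPP; intro Hnone.
  assert (Hreg : forall t, al < t < be -> regular a b (upd y 2 t))
    by (intros t _; apply regular_upd; auto).
  assert (Hmid : al < (al + be) / 2 < be) by lra.
  pose proof (tderivn_zero_on_interval a b 2 y al be n (XL_term (I_term n)) Hreg
                (fun t Ht => NNPP _ (fun Hne => Hnone (ex_intro _ t (conj Ht Hne))))
                _ Hmid) as Hzero.
  rewrite XL_I_term_top_coefficient, !upd_neq in Hzero by (auto || apply Hreg, Hmid).
  destruct Hy as [_ Hs].
  pose proof (INR_fact_neq_0 n) as Hfact.
  apply Hs, (Rmult_eq_reg_l (- INR (Factorial.fact n) * a * y 3%nat)); [lra |].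
  repeat apply Rmult_integral_contrapositive_currified; auto; lra.
Qed.

End Integral.

Lemma interval_near_avoiding_0 v eps : 0 < eps ->
  exists al be, al < be /\ forall t, al < t < be -> Rabs (v - t) < eps /\ t <> 0.
Proof.
  intros Heps; destruct (Rle_dec 0 v) as [Hv | Hv].
  - exists (v + eps / 4), (v + eps / 2); split; [lra |].
    intros t Ht; split; [rewrite Rabs_left | ]; lra.
  - exists (v - eps / 2), (v - eps / 4); split; [lra |].
    intros t Ht; split; [rewrite Rabs_right | ]; lra.
Qed.

Lemma nonzero_close v eps : 0 < eps -> exists w, Rabs (v - w) < eps /\ w <> 0.
Proof.
  intros Heps; destruct (interval_near_avoiding_0 v eps Heps) as [al [be [Hab Hnear]]].
  exists ((al + be) / 2); apply Hnear; lra.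
Qed.

Lemma affine_nonzero_close A B v eps : 0 < eps -> B <> 0 ->
  exists w, Rabs (v - w) < eps /\ w * A - B <> 0.
Proof.
  intros Heps HB; destruct (Req_dec (v * A - B) 0) as [Hv | Hv].
  - exists (v + eps / 2); split.
    + replace (v - (v + eps / 2)) with (- (eps / 2)) by ring.
      rewrite Rabs_Ropp, Rabs_right; lra.
    + intro Hw; destruct (Req_dec A 0) as [HA | HA].
      * subst A; apply HB; lra.
      * apply HA, (Rmult_eq_reg_l (eps / 2)); lra.
  - exists v; split; [rewrite Rminus_diag, Rabs_R0; exact Heps | exact Hv].
Qed.

Lemma sin_affine_nonzero_close a b v eps : 0 < a -> 0 < eps ->
  exists w, Rabs (v - w) < eps /\ sin (a * w + b) <> 0.
Proof.
  intros Ha Heps; destruct (Req_dec (sin (a * v + b)) 0) as [Hs | Hs].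
  - (* At a zero of [sin], [cos] is [±1] and a small shift [d] gives [± sin (a d) <> 0]. *)
    set (d := Rmin (eps / 2) (1 / a)).
    assert (Hd : 0 < d) by (apply Rmin_pos; [lra | apply Rdiv_lt_0_compat; lra]).
    assert (Hd1 : d <= eps / 2) by apply Rmin_l.
    assert (Had : a * d <= 1).
    { apply (Rle_trans _ (a * (1 / a))); [apply Rmult_le_compat_l; [lra | apply Rmin_r] |].
      right; field; lra. }
    exists (v + d); split.
    + replace (v - (v + d)) with (- d) by ring; rewrite Rabs_Ropp, Rabs_right; lra.
    + replace (a * (v + d) + b) with ((a * v + b) + a * d) by ring.
      rewrite sin_plus, Hs.
      assert (Hc : cos (a * v + b) <> 0).
      { intro Hc; pose proof (sin2_cos2 (a * v + b)) as H1.
        rewrite Hs, Hc in H1; unfold Rsqr in H1; lra. }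
      assert (Hsd : 0 < sin (a * d)) by (apply sin_gt_0; [nra | pose proof PI2_3_2; lra]).
      intro Hz; apply Hc; nra.
  - exists v; split; [rewrite Rminus_diag, Rabs_R0; exact Heps | exact Hs].
Qed.

Lemma XL_I_term_nonzero_close a b k n y v eps :
  a <> 0 -> regular a b y -> y 3%nat <> 0 -> 0 < eps ->
  exists t, Rabs (v - t) < eps /\ t <> 0 /\
    eval a b (XL_term a k (I_term a k n)) (upd y 2 t) <> 0.
Proof.
  intros Ha Hy Hp Heps.
  destruct (interval_near_avoiding_0 v eps Heps) as [al [be [Hab Hnear]]].
  destruct (XL_I_term_nonzero_on_interval a b k n y al be Ha Hy Hp Hab) as [t [Ht Hnz]].
  exists t; destruct (Hnear t Ht); auto.
Qed.

Lemma Rmult_eq_0_l_nz c v : c * v = 0 -> v <> 0 -> c = 0.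
Proof. intros Hcv Hv; destruct (Rmult_integral _ _ Hcv); [assumption | contradiction]. Qed.

(* Pairing with [p_ψ e_ψ - F' e_{p_ψ}] kills [dH] and [dL] and maps [dI] to [X_L I];
   then the [p_r]-component separates [dH] from [dL]. *)
Lemma lin_indep_3_in_4 (gH gL gI : nat -> R) u Fp pr ps :
  gH 1%nat = u * Fp -> gH 2%nat = pr -> gH 3%nat = u * ps ->
  gL 1%nat = Fp -> gL 2%nat = 0 -> gL 3%nat = ps ->
  pr <> 0 -> ps <> 0 -> ps * gI 1%nat - Fp * gI 3%nat <> 0 ->
  lin_indep 4 3 (fun j => match j with 0%nat => gH | 1%nat => gL | _ => gI end).
Proof.
  intros H1 H2 H3 L1 L2 L3 Hpr Hps HX c Hc.
  pose proof (Hc 1%nat ltac:(lia)) as E1; pose proof (Hc 2%nat ltac:(lia)) as E2;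
    pose proof (Hc 3%nat ltac:(lia)) as E3; simpl in E1, E2, E3.
  rewrite H1, L1 in E1; rewrite H2, L2 in E2; rewrite H3, L3 in E3.
  assert (C2 : c 2%nat = 0).
  { apply (Rmult_eq_0_l_nz _ (ps * gI 1%nat - Fp * gI 3%nat)); [| exact HX].
    apply (f_equal (Rmult ps)) in E1; apply (f_equal (Rmult Fp)) in E3; lra. }
  assert (C0 : c 0%nat = 0) by (apply (Rmult_eq_0_l_nz _ pr); [rewrite C2 in E2; lra | exact Hpr]).
  assert (C1 : c 1%nat = 0)
    by (apply (Rmult_eq_0_l_nz _ ps); [rewrite C0, C2 in E3; lra | exact Hps]).
  intros j Hj; destruct j as [| [| [| j]]]; auto; lia.
Qed.

Lemma lin_indep_5_in_6 (g0 g1 g2 g3 g4 : nat -> R) u Fp pr ps pz Z :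
  g0 1%nat = u * Fp -> g0 2%nat = 0 -> g0 3%nat = pr -> g0 4%nat = u * ps -> g0 5%nat = pz ->
  g1 1%nat = 0 -> g1 2%nat = 0 -> g1 3%nat = 0 -> g1 4%nat = 0 -> g1 5%nat = pz ->
  g2 1%nat = Fp -> g2 2%nat = 0 -> g2 3%nat = 0 -> g2 4%nat = ps -> g2 5%nat = 0 ->
  g3 2%nat = Z -> g4 2%nat = 0 -> g4 5%nat = 0 ->
  Z <> 0 -> pr <> 0 -> ps <> 0 -> pz <> 0 -> ps * g4 1%nat - Fp * g4 4%nat <> 0 ->
  lin_indep 6 5 (fun j => match j with
                          | 0%nat => g0 | 1%nat => g1 | 2%nat => g2 | 3%nat => g3 | _ => g4
                          end).
Proof.
  intros A1 A2 A3 A4 A5 B1 B2 B3 B4 B5 C1 C2 C3 C4 C5 D2 I2 I5 HZ Hpr Hps Hpz HX c Hc.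
  pose proof (Hc 1%nat ltac:(lia)) as E1; pose proof (Hc 2%nat ltac:(lia)) as E2;
    pose proof (Hc 3%nat ltac:(lia)) as E3; pose proof (Hc 4%nat ltac:(lia)) as E4;
    pose proof (Hc 5%nat ltac:(lia)) as E5; simpl in E1, E2, E3, E4, E5.
  rewrite A1, B1, C1 in E1; rewrite A2, B2, C2, D2, I2 in E2; rewrite A3, B3, C3 in E3;
    rewrite A4, B4, C4 in E4; rewrite A5, B5, C5, I5 in E5.
  assert (Hc3 : c 3%nat = 0) by (apply (Rmult_eq_0_l_nz _ Z); [lra | exact HZ]).
  rewrite Hc3 in E1, E3, E4, E5.
  assert (Hc4 : c 4%nat = 0).
  { apply (Rmult_eq_0_l_nz _ (ps * g4 1%nat - Fp * g4 4%nat)); [| exact HX].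
    apply (f_equal (Rmult ps)) in E1; apply (f_equal (Rmult Fp)) in E4; lra. }
  rewrite Hc4 in E3, E4.
  assert (Hc0 : c 0%nat = 0) by (apply (Rmult_eq_0_l_nz _ pr); [lra | exact Hpr]).
  rewrite Hc0 in E4, E5.
  assert (Hc1 : c 1%nat = 0) by (apply (Rmult_eq_0_l_nz _ pz); [lra | exact Hpz]).
  assert (Hc2 : c 2%nat = 0) by (apply (Rmult_eq_0_l_nz _ ps); [lra | exact Hps]).
  intros j Hj; destruct j as [| [| [| [| [| j]]]]]; auto; lia.
Qed.

Definition lift64 (g : nat -> R) : nat -> R :=
  fun i => match i with
           | 0%nat => g 0%nat | 1%nat => g 1%nat
           | 3%nat => g 2%nat | 4%nat => g 3%nat | _ => 0 end.

Lemma proj64_upd_dropped x i t : i = 2%nat \/ i = 5%nat -> proj64 (upd x i t) = proj64 x.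
Proof.
  intros Hi; extensionality j.
  destruct j as [| [| [| [| j]]]]; simpl; rewrite ?upd_neq; auto; lia.
Qed.

Lemma proj64_upd x i j t : (i < 6)%nat -> i <> 2%nat -> i <> 5%nat ->
  j = (match i with 0%nat => 0 | 1%nat => 1 | 3%nat => 2 | _ => 3 end)%nat ->
  proj64 (upd x i t) = upd (proj64 x) j t.
Proof.
  intros Hi Hi2 Hi5 ->; extensionality l.
  destruct i as [| [| [| [| [| [| i]]]]]]; try lia;
    destruct l as [| [| [| [| l]]]]; reflexivity.
Qed.

Lemma has_grad_proj64 f x g :
  has_grad 4 f (proj64 x) g -> has_grad 6 (fun y => f (proj64 y)) x (lift64 g).
Proof.
  intros Hg i Hi.
  destruct (Nat.eq_dec i 2) as [-> | Hi2]; [| destruct (Nat.eq_dec i 5) as [-> | Hi5]].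
  - apply (derivable_pt_lim_upd_const (fun y => f (proj64 y))); intro t.
    rewrite proj64_upd_dropped; auto.
  - apply (derivable_pt_lim_upd_const (fun y => f (proj64 y))); intro t.
    rewrite proj64_upd_dropped; auto.
  - set (j := (match i with 0%nat => 0 | 1%nat => 1 | 3%nat => 2 | _ => 3 end)%nat).
    apply (derivable_pt_lim_ext (fun t => f (upd (proj64 x) j t))).
    { intro t; rewrite (proj64_upd x i j t Hi Hi2 Hi5 eq_refl); reflexivity. }
    destruct i as [| [| [| [| [| [| i]]]]]]; try lia; apply Hg; unfold j; lia.
Qed.

Lemma continuous_n_proj64 f x :
  continuous_n 4 f (proj64 x) -> continuous_n 6 (fun y => f (proj64 y)) x.
Proof.
  intros Hf eps Heps; destruct (Hf eps Heps) as [d [Hd Hnear]].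
  exists d; split; [exact Hd |]; intros y Hy; apply (Hnear (proj64 y)), distn_lt; [exact Hd |].
  intros i Hi; eapply Rle_lt_trans; [| exact Hy].
  destruct i as [| [| [| [| i]]]]; try lia; cbn [proj64]; apply distn_coord; lia.
Qed.

(** * The reduced system on [(r, ψ, p_r, p_ψ)] *)

Definition L_term (k : R) : term :=
  tadd (tmul (tconst (/ 2)) (tmul (tvar 3) (tvar 3))) (Fterm k).

Definition H_term (k : R) : term :=
  tadd (tmul (tconst (/ 2)) (tmul (tvar 2) (tvar 2))) (tmul (tmul tinv_r tinv_r) (L_term k)).

(* The factors [r] and [sin] put the locus where the terms are undefined into the zero set. *)
Definition P4_term (a k : R) (n : nat) : term :=
  tmul (tvar 0) (tmul tsin (tmul (tvar 2) (tmul (tvar 3) (XL_term a k (I_term a k n))))).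

Lemma Rmult_neq_0_inv u v : u * v <> 0 -> u <> 0 /\ v <> 0.
Proof. intros Huv; split; intro Hz; apply Huv; rewrite Hz; ring. Qed.

Lemma vars_below_XL_I_term n a k m : (4 <= n)%nat -> vars_below n (XL_term a k (I_term a k m)).
Proof.
  intros Hn.
  assert (HI : forall j, vars_below n (I_term a k j)).
  { intro j; induction j as [| j IH]; simpl; [exact I |].
    repeat split; try lia; auto; apply vars_below_tderiv; simpl; auto. }
  unfold XL_term; simpl; repeat split; try lia; apply vars_below_tderiv; simpl; auto.
Qed.

Definition H0_term (k : R) : term :=
  tadd (tmul (tconst (/ 2))
          (tadd (tadd (tmul (tvar 3) (tvar 3)) (tmul (tmul tinv_r tinv_r) (tmul (tvar 4) (tvar 4))))
                (tmul (tvar 5) (tvar 5))))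
       (tmul (Fterm k) (tmul tinv_r tinv_r)).

Definition H1_term : term := tmul (tconst (/ 2)) (tmul (tvar 5) (tvar 5)).

Definition H2_term (k : R) : term := tadd (tmul (tconst (/ 2)) (tmul (tvar 4) (tvar 4))) (Fterm k).

Definition H3_term (k : R) : term :=
  let rpz_zpr := tadd (tmul (tvar 0) (tvar 5)) (tmul (tconst (-1)) (tmul (tvar 2) (tvar 3))) in
  let q := tadd (tconst 1) (tmul (tmul (tvar 2) (tvar 2)) (tmul tinv_r tinv_r)) in
  tadd (tmul (tconst (/ 2)) (tadd (tmul rpz_zpr rpz_zpr) (tmul q (tmul (tvar 4) (tvar 4)))))
       (tmul q (Fterm k)).

Definition P6_term (a k : R) : term :=
  tmul (tvar 0) (tmul tsin (tmul (tvar 3) (tmul (tvar 4) (tmul (tvar 5)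
    (tderiv a 2 (H3_term k)))))).

Section Model.

Variables (lam : nat) (k psi0 : R).

Local Notation a := (INR lam).

Lemma Fpot_eval x : Fpot lam k psi0 (x 1%nat) = eval a psi0 (Fterm k) x.
Proof. unfold Fpot, Fterm; simpl; unfold Rdiv; rewrite Rmult_1_r, Rinv_mult; ring. Qed.

Lemma Deriv_Fpot x : regular a psi0 x ->
  Deriv (Fpot lam k psi0) (x 1%nat) = eval a psi0 (tderiv a 1 (Fterm k)) x.
Proof.
  intros Hx; apply Deriv_eq.
  apply (derivable_pt_lim_ext (fun t => eval a psi0 (Fterm k) (upd x 1 t))).
  { intro t; rewrite <- Fpot_eval, upd_eq; reflexivity. }
  apply eval_tderiv, Hx.
Qed.

Lemma iter_Dop_eval n x : regular a psi0 x ->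
  Nat.iter n (Dop lam k psi0) (fun y => Gfun lam psi0 (y 1%nat)) x
  = eval a psi0 (I_term a k n) x.
Proof.
  revert x; induction n as [| n IH]; intros x Hx; [reflexivity |].
  set (f := Nat.iter n (Dop lam k psi0) (fun y => Gfun lam psi0 (y 1%nat))) in IH.
  change (Dop lam k psi0 f x = eval a psi0 (D_term a k (I_term a k n)) x).
  unfold Dop, XL.
  rewrite (pd_of_term _ _ _ (I_term a k n) x 1 IH Hx),
    (pd_of_term _ _ _ (I_term a k n) x 3 IH Hx), Deriv_Fpot, IH by exact Hx.
  unfold D_term, XL_term; cbn [eval]; rewrite Rinv_mult; ring.
Qed.

Lemma Ilam4_eval x : regular a psi0 x -> Ilam4 lam k psi0 x = eval a psi0 (I_term a k lam) x.
Proof. apply iter_Dop_eval. Qed.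

Lemma L4_eval x : L4 lam k psi0 x = eval a psi0 (L_term k) x.
Proof. unfold L4; rewrite Fpot_eval; simpl; ring. Qed.

Lemma H4_eval x : H4 lam k psi0 x = eval a psi0 (H_term k) x.
Proof.
  unfold H4; rewrite L4_eval; unfold H_term; cbn [eval].
  replace (x 0%nat ^ 2) with (x 0%nat * x 0%nat) by ring; rewrite Rinv_mult; ring.
Qed.

Hypothesis hlam : (0 < lam)%nat.

Lemma P4_term_factors x : eval a psi0 (P4_term a k lam) x <> 0 ->
  regular a psi0 x /\ x 2%nat <> 0 /\ x 3%nat <> 0 /\
  eval a psi0 (XL_term a k (I_term a k lam)) x <> 0.
Proof.
  intros HP; unfold P4_term in HP; cbn [eval] in HP.
  apply Rmult_neq_0_inv in HP as [Hr HP]; apply Rmult_neq_0_inv in HP as [Hs HP].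
  apply Rmult_neq_0_inv in HP as [Hpr HP]; apply Rmult_neq_0_inv in HP as [Hps HX].
  repeat split; assumption.
Qed.

Lemma P4_term_nonzero_close x eps : 0 < eps ->
  exists y, distn 4 x y < eps /\ eval a psi0 (P4_term a k lam) y <> 0.
Proof.
  intros Heps.
  assert (Ha : 0 < a) by (apply lt_0_INR; exact hlam).
  destruct (nonzero_close (x 0%nat) eps Heps) as [r [Hr Nr]].
  destruct (sin_affine_nonzero_close a psi0 (x 1%nat) eps Ha Heps) as [psi [Hpsi Npsi]].
  destruct (nonzero_close (x 3%nat) eps Heps) as [ps [Hps Nps]].
  set (y := fun i => match i with 0%nat => r | 1%nat => psi | 3%nat => ps | _ => x i end).
  assert (Hy : regular a psi0 y) by (split; assumption).
  destruct (XL_I_term_nonzero_close a psi0 k lam y (x 2%nat) eps ltac:(lra) Hy Nps Heps)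
    as [pr [Hpr [Npr NX]]].
  exists (upd y 2 pr); split.
  - apply distn_lt; [exact Heps |]; intros i Hi.
    destruct i as [| [| [| [| i]]]]; try lia; assumption.
  - unfold P4_term; cbn [eval].
    repeat apply Rmult_integral_contrapositive_currified; assumption.
Qed.

Lemma func_indep_reduced : func_indep 4 3 (dom4 lam psi0) (family4 lam k psi0).
Proof.
  exists (fun x => eval a psi0 (P4_term a k lam) x = 0); split; [| split].
  - apply term_zero_set_closed; [lia | | intros x Hx; apply P4_term_factors, Hx].
    unfold P4_term; simpl; repeat split; try lia; apply vars_below_XL_I_term; lia.
  - intros x eps Heps; destruct (P4_term_nonzero_close x eps Heps) as [y [Hxy Hy]].
    exists y; split; assumption.
  - intros x _ HP; destruct (P4_term_factors x HP) as [Hx [Hpr [Hps HX]]].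
    set (grad e := fun i => eval a psi0 (tderiv a i e) x).
    exists (fun j => match j with
                     | 0%nat => grad (H_term k) | 1%nat => grad (L_term k)
                     | _ => grad (I_term a k lam) end); split.
    + intros j Hj i Hi; destruct j as [| [| j]]; apply derivable_pt_lim_of_term;
        try exact Hx; intros y Hy; simpl; auto using H4_eval, L4_eval, Ilam4_eval.
    + apply (lin_indep_3_in_4 _ _ _ (/ x 0%nat * / x 0%nat)
               (eval a psi0 (tderiv a 1 (Fterm k)) x) (x 2%nat) (x 3%nat));
        try (unfold grad, H_term, L_term, Fterm; simpl; field; destruct Hx; tauto); auto.
      unfold XL_term in HX; cbn [eval] in HX; unfold grad.
      intro Hz; apply HX; rewrite <- Hz; ring.
Qed.

(** * The full system on [(r, ψ, z, p_r, p_ψ, p_z)] *)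

Lemma H0_eval x : H0 lam k psi0 x = eval a psi0 (H0_term k) x.
Proof.
  unfold H0; rewrite Fpot_eval; unfold H0_term; cbn [eval]; unfold Rdiv.
  replace (x 0%nat ^ 2) with (x 0%nat * x 0%nat) by ring; rewrite Rinv_mult; ring.
Qed.

Lemma H1_eval x : H1 x = eval a psi0 H1_term x.
Proof. unfold H1; simpl; ring. Qed.

Lemma H2_eval x : H2 lam k psi0 x = eval a psi0 (H2_term k) x.
Proof. unfold H2; rewrite Fpot_eval; simpl; ring. Qed.

Lemma H3_eval x : H3 lam k psi0 x = eval a psi0 (H3_term k) x.
Proof.
  unfold H3; rewrite Fpot_eval; unfold H3_term; cbn [eval]; unfold Rdiv.
  replace (x 0%nat ^ 2) with (x 0%nat * x 0%nat) by ring; rewrite Rinv_mult; ring.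
Qed.

Lemma tderiv_z_H3_term_upd y z : regular a psi0 y ->
  eval a psi0 (tderiv a 2 (H3_term k)) (upd y 2 z)
  = z * (y 3%nat * y 3%nat
         + / y 0%nat * / y 0%nat * (y 4%nat * y 4%nat + 2 * eval a psi0 (Fterm k) y))
    - y 3%nat * y 0%nat * y 5%nat.
Proof.
  intros [Hr Hs]; unfold H3_term, Fterm; simpl; unfold upd; simpl; field; tauto.
Qed.

Definition bad6 (x : nat -> R) : R :=
  eval a psi0 (P6_term a k) x * eval a psi0 (XL_term a k (I_term a k lam)) (proj64 x).

Lemma bad6_factors x : bad6 x <> 0 ->
  regular a psi0 x /\ x 3%nat <> 0 /\ x 4%nat <> 0 /\ x 5%nat <> 0 /\
  eval a psi0 (tderiv a 2 (H3_term k)) x <> 0 /\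
  eval a psi0 (XL_term a k (I_term a k lam)) (proj64 x) <> 0.
Proof.
  intros Hb; unfold bad6, P6_term in Hb; cbn [eval] in Hb.
  apply Rmult_neq_0_inv in Hb as [HP HX]; apply Rmult_neq_0_inv in HP as [Hr HP].
  apply Rmult_neq_0_inv in HP as [Hs HP]; apply Rmult_neq_0_inv in HP as [Hpr HP].
  apply Rmult_neq_0_inv in HP as [Hps HP]; apply Rmult_neq_0_inv in HP as [Hpz HZ].
  repeat split; assumption.
Qed.

Lemma bad6_nonzero_close x eps : 0 < eps -> exists y, distn 6 x y < eps /\ bad6 y <> 0.
Proof.
  intros Heps.
  assert (Ha : 0 < a) by (apply lt_0_INR; exact hlam).
  destruct (nonzero_close (x 0%nat) eps Heps) as [r [Hr Nr]].
  destruct (sin_affine_nonzero_close a psi0 (x 1%nat) eps Ha Heps) as [psi [Hpsi Npsi]].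
  destruct (nonzero_close (x 4%nat) eps Heps) as [ps [Hps Nps]].
  destruct (nonzero_close (x 5%nat) eps Heps) as [pz [Hpz Npz]].
  set (y := fun i => match i with
                     | 0%nat => r | 1%nat => psi | 4%nat => ps | 5%nat => pz | _ => x i end).
  assert (Hy : regular a psi0 (proj64 y)) by (split; assumption).
  destruct (XL_I_term_nonzero_close a psi0 k lam (proj64 y) (x 3%nat) eps ltac:(lra) Hy Nps Heps)
    as [pr [Hpr [Npr NX]]].
  set (y' := upd y 3 pr).
  assert (Hy' : regular a psi0 y') by (split; assumption).
  assert (Hproj : proj64 y' = upd (proj64 y) 2 pr) by (apply proj64_upd; lia).
  destruct (affine_nonzero_close
              (y' 3%nat * y' 3%nat
               + / y' 0%nat * / y' 0%nat * (y' 4%nat * y' 4%nat + 2 * eval a psi0 (Fterm k) y'))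
              (y' 3%nat * y' 0%nat * y' 5%nat) (x 2%nat) eps Heps)
    as [z [Hz NZ]].
  { repeat apply Rmult_integral_contrapositive_currified; assumption. }
  exists (upd y' 2 z); split.
  - apply distn_lt; [exact Heps |]; intros i Hi.
    destruct i as [| [| [| [| [| [| i]]]]]]; try lia; assumption.
  - unfold bad6; rewrite proj64_upd_dropped, Hproj by auto.
    unfold P6_term; cbn [eval]; rewrite tderiv_z_H3_term_upd by exact Hy'.
    repeat apply Rmult_integral_contrapositive_currified; assumption.
Qed.

Lemma func_indep_full : func_indep 6 5 (dom6 lam psi0) (family6 lam k psi0).
Proof.
  exists (fun x => bad6 x = 0); split; [| split].
  - apply zero_set_closed; intros x Hb.
    assert (Hx : regular a psi0 x) by apply (bad6_factors x Hb).
    apply continuous_n_mul.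
    + apply continuous_n_eval; [lia | | exact Hx].
      unfold P6_term, H3_term, Fterm; simpl; repeat split; lia.
    + apply (continuous_n_proj64 (eval a psi0 (XL_term a k (I_term a k lam)))).
      apply continuous_n_eval; [lia | apply vars_below_XL_I_term; lia | exact Hx].
  - intros x eps Heps; destruct (bad6_nonzero_close x eps Heps) as [y [Hxy Hy]].
    exists y; split; assumption.
  - intros x _ Hb; destruct (bad6_factors x Hb) as [Hx [Hpr [Hps [Hpz [HZ HX]]]]].
    set (grad e := fun i => eval a psi0 (tderiv a i e) x).
    set (gradI := fun i => eval a psi0 (tderiv a i (I_term a k lam)) (proj64 x)).
    exists (fun j => match j with
                     | 0%nat => grad (H0_term k) | 1%nat => grad H1_term
                     | 2%nat => grad (H2_term k) | 3%nat => grad (H3_term k)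
                     | _ => lift64 gradI end); split.
    + intros j Hj; destruct j as [| [| [| [| j]]]];
        try (intros i Hi; apply derivable_pt_lim_of_term;
             [intros y Hy; simpl; auto using H0_eval, H1_eval, H2_eval, H3_eval | exact Hx]).
      apply (has_grad_proj64 (Ilam4 lam k psi0)); intros i Hi.
      apply derivable_pt_lim_of_term; [exact Ilam4_eval | exact Hx].
    + apply (lin_indep_5_in_6 _ _ _ _ _ (/ x 0%nat * / x 0%nat)
               (eval a psi0 (tderiv a 1 (Fterm k)) x) (x 3%nat) (x 4%nat) (x 5%nat)
               (eval a psi0 (tderiv a 2 (H3_term k)) x));
        try (unfold grad, H0_term, H1_term, H2_term, Fterm; simpl; field; destruct Hx; tauto);
        auto.
      unfold XL_term in HX; cbn [eval] in HX; unfold lift64, gradI.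
      intro Hz; apply HX; rewrite <- Hz; simpl; ring.
Qed.

End Model.

Theorem theorem2 (lam : nat) (k psi0 : R) (hlam : (0 < lam)%nat) (hk : k <> 0) :
  func_indep 4 3 (dom4 lam psi0) (family4 lam k psi0) /\
  func_indep 6 5 (dom6 lam psi0) (family6 lam k psi0).
Proof.
  split; [apply func_indep_reduced | apply func_indep_full]; exact hlam.
Qed.
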